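(* Let $T$ take values in $\mathcal{S}\subseteq\mathbb{N}$, $q_t=\mathbb{P}(T=t)$, with $\mathbb{E}[T^\delta]<\infty$ for some $\delta>0$. Fix $\tau\in(0,1)$, a kernel $\kappa:\mathcal{S}^2\to[0,\infty)$, and two vertex types $t,s\in\mathcal{S}$ that are stable at tolerance $\tau$; set $\Lambda_n(t,s)=\lfloor nq_tq_s\kappa(t,s)\rfloor$. Let $\kappa_n'$ be another kernel for which there exist $\alpha\in(1/2-\tau/2,1/2)$ and $C>0$ with $$\kappa_n'(t,s)\ge\kappa(t,s)+\frac{Cn^{-1/2+\alpha}}{\sqrt{q_tq_s}},$$ and let $A_n$ be the arc-to-vertex-type function of $\texttt{IRD}_n(T,\kappa_n')$. Then for all sufficiently large $n$, $\mathbb{P}(A_n(t,s)<\Lambda_n(t,s))\le2\exp(-\log(n)^2/2)$.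
   Context: $\texttt{IRD}_n(T,\kappa_n')$: vertex set $[n]$, types $T_v$ i.i.d. as $T$, each arc $(v,w)$, $v\ne w$, present independently with probability $\min\{\kappa_n'(T_v,T_w)/n,1\}$. Arc-to-vertex-type function: $A_n(t,s)=|\{(v,w)\text{ arc}:T_v=t,T_w=s\}|$. Stability: $u_n^\uparrow(\tau)=\inf\{t:q_s<n^{-1+\tau}\ \forall s\ge t\}$; type $t$ is stable at tolerance $\tau$ if $t<u_n^\uparrow(\tau)$. *)

From HB Require Import structures.
From mathcomp Require Import all_boot all_order all_algebra.
From mathcomp Require Import all_classical all_reals all_analysis.
Set Implicit Arguments. Unset Strict Implicit. Unset Printing Implicit Defensive.
Import Order.TTheory GRing.Theory Num.Theory.
Local Open Scope classical_set_scope.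
Local Open Scope ring_scope.

Section IRD.
Variable R : realType.

Definition arc_prob (kn : nat -> nat -> R) (n : nat) (a b : nat) : R :=
  Num.min (kn a b / n%:R) 1.

Definition offdiag (n : nat) : {set 'I_n * 'I_n} := [set e | e.1 != e.2].

(* Conditional probability of arc set E given the type vector x. *)
Definition graph_weight (kn : nat -> nat -> R) (n : nat)
    (x : {ffun 'I_n -> nat}) (E : {set 'I_n * 'I_n}) : R :=
  if E \subset offdiag n then
    \prod_(e in offdiag n)
      (if e \in E then arc_prob kn n (x e.1) (x e.2)
       else 1 - arc_prob kn n (x e.1) (x e.2))
  else 0.

(* Probability that IRD_n(T, kn) (types i.i.d. with law q) satisfies P. *)
Definition IRD_prob (q : nat -> R) (kn : nat -> nat -> R) (n : nat)
    (P : {ffun 'I_n -> nat} -> {set 'I_n * 'I_n} -> bool) : \bar R :=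
  \esum_(x in [set: {ffun 'I_n -> nat}])
    ((\prod_(v < n) q (x v)) *
     \sum_(E : {set 'I_n * 'I_n} | P x E) @graph_weight kn n x E)%:E.

Definition arc_count (n : nat) (x : {ffun 'I_n -> nat})
    (E : {set 'I_n * 'I_n}) (t s : nat) : nat :=
  #|[set e in E | (x e.1 == t) && (x e.2 == s)]|.

(* t < u_n^up(tau) = inf {u | forall s >= u, q_s < n^(-1+tau)} *)
Definition stable (q : nat -> R) (tau : R) (n t : nat) : Prop :=
  forall u : nat, (forall s : nat, (u <= s)%N -> q s < n%:R `^ (tau - 1)) ->
    (t < u)%N.

End IRD.

From mathcomp Require Import all_boot all_order all_algebra.
From mathcomp Require Import all_classical all_reals all_analysis.
From mathcomp Require Import ring lra.
Set Implicit Arguments. Unset Strict Implicit. Unset Printing Implicit Defensive.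
Import Order.TTheory GRing.Theory Num.Theory.
Local Open Scope classical_set_scope.
Local Open Scope ring_scope.

(* Given the vertex types, the arcs from type [t] to type [s] are independent with
   probability [p = min(kappa'_n(t,s)/n, 1)], and there are at least [N_t (N_s - 1)] of them,
   where [N_t], [N_s] are the binomial numbers of vertices of types [t] and [s].  With the
   relative excess [d ~ n^(alpha - 1/2)] of [kappa'_n] over [kappa], three Chernoff bounds
   cover the event [A_n(t,s) < Lambda_n(t,s)]: either [N_t < (1 - d) n q_t], or
   [N_s < (1 - d) n q_s], or else the conditional mean of [A_n(t,s)] exceeds [Lambda_n(t,s)]
   by order [d Lambda_n(t,s)].  Each exponent is of order [n d^2 ~ n^(2 alpha)], which
   eventually beats [log(n)^2]. *)

Lemma sum_subsets_prod (R : comPzSemiRingType) (T : finType) (D : {set T})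
    (u v : T -> R) :
  \sum_(E : {set T})
     (if E \subset D then \prod_(e in D) (if e \in E then u e else v e) else 0)
  = \prod_(e in D) (u e + v e).
Proof.
pose F (e : T) (b : bool) : R :=
  if e \in D then (if b then u e else v e) else (if b then 0 else 1).
have -> : \prod_(e in D) (u e + v e) = \prod_(e : T) \sum_(b : bool) F e b.
  rewrite big_mkcond /=; apply: eq_bigr => e _.
  by rewrite big_bool /F; case: (e \in D) => //=; rewrite add0r.
rewrite bigA_distr_bigA /=.
rewrite (reindex (fun E : {set T} => [ffun e => e \in E])) /=; last first.
  exists (fun f : {ffun T -> bool} => [set e | f e]%SET) => [E _|f _].
    by apply/setP => e; rewrite !(inE, ffunE).
  by apply/ffunP => e; rewrite !(inE, ffunE).
apply: eq_bigr => E _.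
rewrite [RHS](eq_bigr (fun e => F e (e \in E))); last by move=> e _; rewrite ffunE.
case: ifP => [sED|/negbT/subsetPn[e eE eD]]; last first.
  by rewrite (bigD1 e) //= /F (negbTE eD) eE mul0r.
rewrite big_mkcond /=; apply: eq_bigr => e _; rewrite /F.
by case: ifP => // eD; rewrite (contraFF (fintype.subsetP sED e) eD).
Qed.

Lemma sum_ffun_prod (R : comPzSemiRingType) n K (f : nat -> R) :
  \sum_(y : {ffun 'I_n -> 'I_K}) \prod_(v < n) f (y v) = (\sum_(k < K) f k) ^+ n.
Proof.
by rewrite -(bigA_distr_bigA (fun (_ : 'I_n) (k : 'I_K) => f k)) prodr_const card_ord.
Qed.

Section RealBounds.
Variable R : realType.

Lemma expRN_le (x : R) : 0 <= x -> expR (- x) <= 1 - x + x ^+ 2.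
Proof.
move=> x0; have y0 := expR_gt0 (- x).
have inv : expR (- x) * expR x = 1 by rewrite -expRD addNr expR0.
have y1 : expR (- x) * (1 + x) <= 1.
  by rewrite -[X in _ <= X]inv ler_pM2l // expR_ge1Dx.
rewrite -(@ler_pM2r _ (1 + x)); last by rewrite ltr_wpDr.
by apply: le_trans y1 _; have := exprn_ge0 3 x0; nra.
Qed.

Lemma one_sub_expRN_ge (x : R) : 0 <= x -> x - x ^+ 2 <= 1 - expR (- x).
Proof. by move=> /expRN_le; lra. Qed.

Lemma expRN1_le_half : expR (- 1 : R) <= 1 / 2.
Proof.
have inv : expR (- 1 : R) * expR 1 = 1 by rewrite -expRD addNr expR0.
have : expR (- 1 : R) * 2 <= 1.
  by rewrite -[X in _ <= X]inv ler_pM2l ?expR_gt0 //; have := expR_ge1Dx (1 : R); lra.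
lra.
Qed.

Lemma ln_sqr_le_powR (x e : R) : 1 <= x -> 0 < e ->
  ln x ^+ 2 <= (4 / e) ^+ 2 * x `^ (e / 2).
Proof.
move=> x1 e0; have x0 : 0 < x by apply: lt_le_trans x1.
have ln_le : ln x <= 4 / e * x `^ (e / 4).
  have := ln_sublinear (powR_gt0 (e / 4) x0); rewrite ln_powR => h.
  have -> : ln x = 4 / e * (e / 4 * ln x) by field; rewrite gt_eqF.
  by rewrite ler_pM2l ?ltW // divr_gt0.
have -> : x `^ (e / 2) = (x `^ (e / 4)) ^+ 2.
  by rewrite expr2 -powRD ?(gt_eqF x0) ?implybT //; congr (_ `^ _); field.
rewrite -exprMn; apply: lerXn2r => //; rewrite nnegrE ?ln_ge0 //.
by rewrite mulr_ge0 ?powR_ge0 // divr_ge0 // ltW.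
Qed.

Lemma ln_sqr_le_powR_eventually (c e K : R) : 0 < c -> 0 < e ->
  \forall n \near \oo, ln (n%:R : R) ^+ 2 + K <= c * n%:R `^ e.
Proof.
move=> c0 e0; set A := (4 / e) ^+ 2.
have A0 : 0 <= A by rewrite /A exprn_ge0 // divr_ge0 // ltW.
set Y := (A + `|K|) / c + 1.
have Y1 : 1 <= Y by rewrite /Y lerDr divr_ge0 // ?addr_ge0 // ltW.
near=> n.
have nY : Y `^ (2 / e) <= n%:R by near: n; exact: nbhs_infty_ger.
have n1 : 1 <= (n%:R : R).
  apply: le_trans nY; rewrite -[X in X <= _](powRr0 Y).
  by apply: ler_powR => //; rewrite divr_ge0 // ltW.
have n0 : 0 < (n%:R : R) by apply: lt_le_trans n1.
set y := (n%:R : R) `^ (e / 2).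
have Yy : Y <= y.
  have -> : Y = (Y `^ (2 / e)) `^ (e / 2).
    rewrite -powRrM (_ : 2 / e * (e / 2) = 1) ?powRr1 //.
      by apply: le_trans Y1.
    by field; rewrite gt_eqF.
  by apply: ge0_ler_powR nY; rewrite ?nnegrE ?powR_ge0 ?divr_ge0 // ltW.
have -> : (n%:R : R) `^ e = y ^+ 2.
  by rewrite expr2 -powRD ?(gt_eqF n0) ?implybT //; congr (_ `^ _); field.
have ln_le : ln (n%:R : R) ^+ 2 <= A * y := ln_sqr_le_powR n1 e0.
have y1 : 1 <= y by apply: le_trans Y1 Yy.
have cYy : c * Y * y <= c * y * y.
  by rewrite -mulrA -(mulrA c y) ler_pM2l // ler_pM2r // (lt_le_trans ltr01 y1).
have cY : c * Y = A + `|K| + c by rewrite /Y; field; rewrite gt_eqF.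
rewrite cY !mulrDl in cYy.
have Ky : K <= `|K| * y by apply: le_trans (ler_norm K) _; rewrite ler_peMr.
have := mulr_ge0 (ltW c0) (le_trans ler01 y1); rewrite expr2; lra.
Unshelve. all: by end_near.
Qed.

Lemma sum3_expR_le (l x1 x2 x3 : R) :
  x1 <= - (l / 2) - 1 -> x2 <= - (l / 2) - 1 -> x3 <= - (l / 2) - 1 ->
  expR x1 + expR x2 + expR x3 <= 2 * expR (- l / 2).
Proof.
have split_exp : expR (- (l / 2) - 1) = expR (- l / 2) * expR (- 1) by rewrite -expRD mulNr.
move=> h1 h2 h3.
have [e1 e2 e3] : [/\ expR x1 <= expR (- l / 2) * expR (- 1),
    expR x2 <= expR (- l / 2) * expR (- 1) & expR x3 <= expR (- l / 2) * expR (- 1)].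
  by split; rewrite -split_exp ler_expR.
have : expR (- l / 2) * expR (- 1) <= expR (- l / 2) * (1 / 2).
  by rewrite ler_pM2l ?expR_gt0 // expRN1_le_half.
have := expR_gt0 (- l / 2); lra.
Qed.

Lemma bernoulli_mgf_pow_le (p lam m : R) (M : nat) :
  0 <= p <= 1 -> 0 <= lam <= 1 -> m <= M%:R ->
  (1 - p + p * expR (- lam)) ^+ M <= expR (- (p * (lam - lam ^+ 2) * m)).
Proof.
move=> /andP[p0 p1] /andP[lam0 lam1] mM.
have e0 := expR_ge0 (- lam).
have base0 : 0 <= 1 - p + p * expR (- lam) by have := mulr_ge0 p0 e0; nra.
have base_le : 1 - p + p * expR (- lam) <= expR (- (p * (1 - expR (- lam)))).
  by have := expR_ge1Dx (- (p * (1 - expR (- lam)))); lra.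
apply: le_trans (lerXn2r M _ _ base_le) _; rewrite ?nnegrE ?expR_ge0 //.
rewrite -expRM_natr ler_expR mulNr lerN2.
have sqr_le := one_sub_expRN_ge lam0.
have lam_sqr : 0 <= lam - lam ^+ 2 by nra.
apply: le_trans (_ : p * (lam - lam ^+ 2) * M%:R <= _).
  by rewrite ler_wpM2l // mulr_ge0.
by rewrite ler_wpM2r // ler_wpM2l.
Qed.

End RealBounds.

Definition val_types {n K} (y : {ffun 'I_n -> 'I_K}) : {ffun 'I_n -> nat} :=
  [ffun v => y v : nat].

Lemma val_types_inj n K : injective (@val_types n K).
Proof.
move=> y1 y2 eq_y; apply/ffunP => v; apply: val_inj.
by have := congr1 (fun x : {ffun 'I_n -> nat} => x v) eq_y; rewrite !ffunE.
Qed.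

Definition type_count {n} (x : {ffun 'I_n -> nat}) (t : nat) : nat :=
  #|[set v | x v == t]%SET|.

Section TypeVectors.
Variable R : realType.

(* A finite set of type vectors has bounded entries, so it lies in the range of some
   [val_types]. *)
Lemma esum_type_vectors_le n (f : {ffun 'I_n -> nat} -> R) (B : R) :
  (forall x, 0 <= f x) ->
  (forall K, \sum_(y : {ffun 'I_n -> 'I_K.+1}) f (val_types y) <= B) ->
  (\esum_(x in [set: {ffun 'I_n -> nat}]) (f x)%:E <= B%:E)%E.
Proof.
move=> f0 sumB; apply: ge_ereal_sup => _ [X [finX _] <-].
have [F XF] := finite_fsetP.1 finX.
pose K := \max_(x <- finmap.enum_fset F) \max_(v < n) x v.
have X_img : X `<=` @val_types n K.+1 @` setT.
  move=> x; rewrite XF => xF; exists [ffun v => inord (x v)] => //.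
  apply/ffunP => v; rewrite /val_types !ffunE inordK // ltnS.
  apply: leq_trans (@leq_bigmax _ (fun i : 'I_n => x i) v) _.
  exact: (@leq_bigmax_seq _ _ xpredT (fun x : {ffun 'I_n -> nat} => \max_(v < n) x v) x xF).
apply: (@le_trans _ _ (\sum_(x \in @val_types n K.+1 @` setT) (f x)%:E)%R).
  apply: lee_fsum_nneg_subset => //.
  - exact/finite_image/finite_finset.
  - by move=> x; rewrite !inE => /X_img.
  - by move=> x _; rewrite lee_fin.
rewrite fsbig_image; last by move=> y1 y2 _ _; apply: val_types_inj.
rewrite (fsbigE (enum {ffun 'I_n -> 'I_K.+1})) ?enum_uniq //; last first.
  by move=> y _; rewrite mem_enum.
under eq_bigl do rewrite in_setT.
by rewrite sumEFin lee_fin enumT; exact: sumB.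
Qed.

Section ProbabilityMass.
Variable q : nat -> R.
Hypothesis q_ge0 : forall k, 0 <= q k.
Hypothesis q_sum1 : (\esum_(k in [set: nat]) (q k)%:E = 1)%E.

Lemma pmf_partial_sum_le1 N : \sum_(k < N) q k <= 1.
Proof.
have : ((\sum_(0 <= k < N) (q k)%:E) <= \sum_(0 <= k <oo) (q k)%:E)%E.
  by apply: nneseries_lim_ge => k _ _; rewrite lee_fin.
by rewrite nneseries_esumT // q_sum1 sumEFin lee_fin big_mkord.
Qed.

Lemma pmf_tilted_sum_le K t (w : R) : 0 <= w ->
  \sum_(k < K) q k * (if k == t :> nat then w else 1) <= 1 - q t * (1 - w).
Proof.
move=> w0; case: (ltnP t K) => [tK|Kt].
  rewrite (bigD1 (Ordinal tK)) //= eqxx.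
  rewrite (eq_bigr (fun k : 'I_K => q k)); last first.
    by move=> k /negbTE kt; rewrite -val_eqE /= in kt; rewrite kt mulr1.
  have := pmf_partial_sum_le1 K; rewrite (bigD1 (Ordinal tK)) //=; lra.
rewrite (eq_bigr (fun k : 'I_K => q k)); last first.
  by move=> k _; rewrite ltn_eqF ?mulr1 // (leq_trans (ltn_ord k) Kt).
have := pmf_partial_sum_le1 t.+1.
rewrite -!(big_mkord xpredT) (big_cat_nat (leq0n K) (leqW Kt)) /= big_nat_recr //=.
have : 0 <= \sum_(K <= i < t) q i by apply: sumr_ge0.
have := mulr_ge0 (q_ge0 t) w0; lra.
Qed.

Lemma type_count_lower_tail n K t (mu a : R) : 0 <= mu ->
  \sum_(y : {ffun 'I_n -> 'I_K}) (\prod_(v < n) q (y v)) *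
     (if (type_count (val_types y) t)%:R < a then 1 else 0)
  <= expR (mu * a - n%:R * q t * (mu - mu ^+ 2)).
Proof.
move=> mu0; pose c k := if k == t then expR (- mu) else 1.
have c_ge0 k : 0 <= c k by rewrite /c; case: ifP; rewrite ?expR_ge0.
have markov (y : {ffun 'I_n -> 'I_K}) : (\prod_(v < n) q (y v)) *
    (if (type_count (val_types y) t)%:R < a then 1 else 0)
    <= expR (mu * a) * \prod_(v < n) (q (y v) * c (y v)).
  have w0 : 0 <= \prod_(v < n) q (y v) by apply: prodr_ge0.
  case: ifP => [small|_]; last first.
    by rewrite mulr0 mulr_ge0 ?expR_ge0 // prodr_ge0 // => v _; rewrite mulr_ge0.
  rewrite mulr1 big_split /= mulrCA -[X in X <= _]mulr1 ler_wpM2l //.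
  have -> : \prod_(v < n) c (y v) = expR (- mu) ^+ type_count (val_types y) t.
    rewrite -prodr_const [RHS]big_mkcond /=; apply: eq_bigr => v _.
    by rewrite !inE ffunE /c; case: ifP.
  rewrite -expRM_natr -expRD -[X in X <= _]expR0 ler_expR mulNr -mulrBr.
  by rewrite mulr_ge0 // subr_ge0 ltW.
apply: le_trans (ler_sum _ (fun y _ => markov y)) _.
rewrite -mulr_sumr (sum_ffun_prod _ _ (fun k => q k * c k)) expRD ler_wpM2l ?expR_ge0 //.
have tilted := pmf_tilted_sum_le K t (expR_ge0 (- mu)).
have decay : 1 - q t * (1 - expR (- mu)) <= expR (- (q t * (mu - mu ^+ 2))).
  apply: le_trans (expR_ge1Dx _); rewrite lerD2l lerN2 ler_wpM2l //.
  exact: one_sub_expRN_ge.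
apply: le_trans (lerXn2r n _ _ (le_trans tilted decay)) _.
- by rewrite nnegrE; apply: sumr_ge0 => k _; exact: mulr_ge0 (q_ge0 k) (c_ge0 k).
- by rewrite nnegrE expR_ge0.
have -> : - (n%:R * q t * (mu - mu ^+ 2)) = - (q t * (mu - mu ^+ 2)) * n%:R by ring.
by rewrite expRM_natr.
Qed.

End ProbabilityMass.
End TypeVectors.

Definition typed_arcs n (x : {ffun 'I_n -> nat}) (t s : nat) : {set 'I_n * 'I_n} :=
  [set e in offdiag n | (x e.1 == t) && (x e.2 == s)].

(* Only the loops [(v, v)] are missing from the pairs of a type-[t] and a type-[s] vertex. *)
Lemma type_count_mul_le n (x : {ffun 'I_n -> nat}) t s :
  (type_count x t * type_count x s <= #|typed_arcs x t s| + type_count x t)%N.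
Proof.
rewrite /type_count -cardsX; set U := [set v | x v == t]%SET.
apply: leq_trans (leq_trans (leq_card_setU _ _) _).
  apply: (@subset_leq_card _ _ (typed_arcs x t s :|: [set (v, v) | v in U])%SET).
  apply/fintype.subsetP => -[v w]; rewrite !inE /= => /andP[xv xw].
  case: (eqVneq v w) => [<-|vw]; last by apply/orP; left; apply/and3P.
  by apply/orP; right; apply/imsetP; exists v; rewrite ?inE.
by rewrite leq_add2l leq_imset_card.
Qed.

Section RandomGraph.
Variable R : realType.
Variable kn : nat -> nat -> R.
Hypothesis kn_ge0 : forall a b, 0 <= kn a b.

Lemma arc_prob_ge0 n a b : 0 <= arc_prob kn n a b.
Proof. by rewrite le_min ler01 andbT divr_ge0. Qed.

Lemma arc_prob_le1 n a b : arc_prob kn n a b <= 1.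
Proof. by rewrite ge_min lexx orbT. Qed.

Lemma arc_prob_mul_ge n a b (y : R) : (0 < n)%N -> y <= kn a b -> y <= n%:R ->
  y <= arc_prob kn n a b * n%:R.
Proof.
move=> n0 yk yn; rewrite -ler_pdivrMr ?ltr0n // le_min ler_pM2r ?invr_gt0 ?ltr0n //.
by rewrite yk ler_pdivrMr ?ltr0n // mul1r.
Qed.

Lemma graph_weight_ge0 n (x : {ffun 'I_n -> nat}) E : 0 <= graph_weight kn x E.
Proof.
rewrite /graph_weight; case: ifP => // _; apply: prodr_ge0 => e _.
by case: ifP; rewrite ?subr_ge0 ?arc_prob_ge0 ?arc_prob_le1.
Qed.

Lemma sum_graph_weight n (x : {ffun 'I_n -> nat}) : \sum_E graph_weight kn x E = 1.
Proof. by rewrite (sum_subsets_prod (offdiag n)) big1 // => e _; rewrite subrKC. Qed.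

Lemma sum_graph_weight_le1 n (x : {ffun 'I_n -> nat}) (P : pred {set 'I_n * 'I_n}) :
  \sum_(E | P E) graph_weight kn x E <= 1.
Proof.
rewrite -(sum_graph_weight x) [leRHS](bigID P) /= lerDl.
by apply: sumr_ge0 => E _; exact: graph_weight_ge0.
Qed.

Section Tilting.
Variables (n : nat) (x : {ffun 'I_n -> nat}) (t s : nat) (lam : R).

Definition tilted_weight (E : {set 'I_n * 'I_n}) : R :=
  if E \subset offdiag n then
    \prod_(e in offdiag n)
      (if e \in E then
         arc_prob kn n (x e.1) (x e.2) * (if e \in typed_arcs x t s then expR (- lam) else 1)
       else 1 - arc_prob kn n (x e.1) (x e.2))
  else 0.

Lemma graph_weight_tilt E :
  graph_weight kn x E * expR (- lam) ^+ arc_count x E t s = tilted_weight E.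
Proof.
rewrite /graph_weight /tilted_weight; case: ifP => [sED|_]; last by rewrite mul0r.
have -> : expR (- lam) ^+ arc_count x E t s =
    \prod_(e in offdiag n) (if e \in E then
       (if e \in typed_arcs x t s then expR (- lam) else 1) else 1).
  rewrite /arc_count -prodr_const big_mkcond [RHS]big_mkcond /=.
  apply: eq_bigr => e _; rewrite !inE.
  case eE: (e \in E) => /=; last by case: (_ != _).
  by have := fintype.subsetP sED e eE; rewrite inE => ->.
by rewrite -big_split; apply: eq_bigr => e _ /=; case: ifP; rewrite ?mulr1.
Qed.

Lemma sum_tilted_weight :
  \sum_E tilted_weight E =
  (1 - arc_prob kn n t s + arc_prob kn n t s * expR (- lam)) ^+ #|typed_arcs x t s|.
Proof.
rewrite (sum_subsets_prod (offdiag n)) -prodr_const big_mkcond [RHS]big_mkcond /=.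
apply: eq_bigr => e _; rewrite /typed_arcs !inE.
case: (e.1 != e.2) => //=; case: ifP => [/andP[/eqP-> /eqP->]|_].
  by rewrite addrC.
by rewrite mulr1 subrKC.
Qed.

Lemma arc_count_chernoff (L : R) (P : pred {set 'I_n * 'I_n}) : 0 <= lam ->
  (forall E, P E -> (arc_count x E t s)%:R < L) ->
  \sum_(E | P E) graph_weight kn x E <=
  expR (lam * L) *
    (1 - arc_prob kn n t s + arc_prob kn n t s * expR (- lam)) ^+ #|typed_arcs x t s|.
Proof.
move=> lam0 small; rewrite -sum_tilted_weight mulr_sumr.
have tilted_ge0 E : 0 <= expR (lam * L) * tilted_weight E.
  by rewrite -graph_weight_tilt !mulr_ge0 ?expR_ge0 ?exprn_ge0 ?graph_weight_ge0.
apply: le_trans (_ : \sum_(E | P E) expR (lam * L) * tilted_weight E <= _); last first.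
  by rewrite [leRHS](bigID P) /= lerDl sumr_ge0.
apply: ler_sum => E PE; rewrite -graph_weight_tilt mulrCA -expRM_natr -expRD.
rewrite -[leLHS]mulr1 ler_wpM2l ?graph_weight_ge0 // -[leLHS]expR0 ler_expR.
by rewrite mulNr -mulrBr mulr_ge0 // subr_ge0 ltW ?small.
Qed.

End Tilting.
End RandomGraph.

Section LowerTail.
Variable R : realType.
Variable kn : nat -> nat -> R.
Hypothesis kn_ge0 : forall a b, 0 <= kn a b.

Lemma arc_count_lower_tail_given_types n (x : {ffun 'I_n -> nat}) t s
    (P : pred {set 'I_n * 'I_n}) (L a b lam : R) :
  (forall E, P E -> (arc_count x E t s)%:R < L) ->
  0 <= a -> 1 <= b -> 0 <= lam <= 1 ->
  \sum_(E | P E) graph_weight kn x E <=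
    (if (type_count x t)%:R < a then 1 else 0) +
    (if (type_count x s)%:R < b then 1 else 0) +
    expR (lam * L - arc_prob kn n t s * (lam - lam ^+ 2) * (a * (b - 1))).
Proof.
move=> small a0 b1 /[dup] lam01 /andP[lam0 _].
have le1 := sum_graph_weight_le1 kn_ge0 x P.
have e0 := expR_ge0 (lam * L - arc_prob kn n t s * (lam - lam ^+ 2) * (a * (b - 1))).
case: ltP => [_|ta]; first by case: ltP => _; lra.
case: ltP => [_|sb]; first by lra.
rewrite !add0r expRD; apply: le_trans (arc_count_chernoff kn_ge0 lam0 small) _.
rewrite ler_wpM2l ?expR_ge0 // bernoulli_mgf_pow_le ?arc_prob_ge0 ?arc_prob_le1 //.
have pairs := type_count_mul_le x t s.
rewrite -(ler_nat R) natrD natrM in pairs.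
apply: (@le_trans _ _ ((type_count x t)%:R * ((type_count x s)%:R - 1))); last by lra.
by apply: ler_pM; lra.
Qed.

Lemma IRD_prob_arc_count_lower_tail (q : nat -> R) n t s
    (P : {ffun 'I_n -> nat} -> {set 'I_n * 'I_n} -> bool) (L a b lam mu1 mu2 : R) :
  (forall k, 0 <= q k) -> (\esum_(k in [set: nat]) (q k)%:E = 1)%E ->
  (forall x E, P x E -> (arc_count x E t s)%:R < L) ->
  0 <= a -> 1 <= b -> 0 <= lam <= 1 -> 0 <= mu1 -> 0 <= mu2 ->
  (IRD_prob q kn P <=
   (expR (mu1 * a - n%:R * q t * (mu1 - mu1 ^+ 2)) +
    expR (mu2 * b - n%:R * q s * (mu2 - mu2 ^+ 2)) +
    expR (lam * L - arc_prob kn n t s * (lam - lam ^+ 2) * (a * (b - 1))))%:E)%E.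
Proof.
move=> q_ge0 q_sum1 small a0 b1 lam01 mu1_ge0 mu2_ge0.
apply: esum_type_vectors_le => [x|K].
  by rewrite mulr_ge0 ?prodr_ge0 ?sumr_ge0 // => *; rewrite graph_weight_ge0.
set arc_tail := expR (lam * L - _).
apply: le_trans (_ : \sum_(y : {ffun 'I_n -> 'I_K.+1}) (\prod_(v < n) q (y v)) *
    ((if (type_count (val_types y) t)%:R < a then 1 else 0) +
     (if (type_count (val_types y) s)%:R < b then 1 else 0) + arc_tail) <= _).
  apply: ler_sum => y _.
  have -> : \prod_(v < n) q (val_types y v) = \prod_(v < n) q (y v).
    by apply: eq_bigr => v _; rewrite ffunE.
  apply: ler_wpM2l; first exact: prodr_ge0.
  exact: arc_count_lower_tail_given_types (small _) a0 b1 lam01.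
rewrite (eq_bigr _ (fun y _ => mulrDr _ _ _)) big_split /=.
rewrite (eq_bigr _ (fun y _ => mulrDr _ _ _)) big_split /= -mulr_suml.
rewrite !lerD ?type_count_lower_tail // ler_piMl ?expR_ge0 //.
by rewrite sum_ffun_prod exprn_ile1 ?sumr_ge0 ?pmf_partial_sum_le1.
Qed.

End LowerTail.

Section Exponents.
Variable R : realType.

Lemma lower_counts_mul_ge (nR qt qs d : R) : 0 < nR -> 0 < qt -> 0 < qs -> 0 <= d ->
  1 <= nR * qs * d ->
  nR * nR * (qt * qs) * (1 - 3 * d) <= nR * qt * (1 - d) * (nR * qs * (1 - d) - 1).
Proof.
move=> nR0 qt0 qs0 d0 one_le; set X := nR * qt; set Y := nR * qs.
have X0 : 0 < X by rewrite mulr_gt0.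
have [h1 h2 h3] : [/\ 0 <= X * (Y * d - 1), 0 <= X * Y * d ^+ 2 & 0 <= X * d].
  by split; rewrite ?mulr_ge0 ?subr_ge0 ?exprn_ge0 // ?ltW // mulr_gt0.
have expand : X * (1 - d) * (Y * (1 - d) - 1) - nR * nR * (qt * qs) * (1 - 3 * d) =
    X * (Y * d - 1) + X * Y * d ^+ 2 + X * d by rewrite /X /Y; ring.
by rewrite -subr_ge0 expand; lra.
Qed.

(* With [a = (1 - d) n q_t] and [b = (1 - d) n q_s] vertices of types [t] and [s], the
   conditional mean [p a (b - 1)] of the arc count exceeds [L = n q_t q_s kappa] by [2 d L]. *)
Lemma arc_mean_gap_ge (nR qt qs kap d p : R) :
  0 < nR -> 0 < qt -> 0 < qs -> 0 < kap -> 0 <= d -> d <= 1 / 8 ->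
  1 <= nR * qs * d -> kap * (1 + 8 * d) <= p * nR ->
  nR * qt * qs * kap + 2 * (nR * qt * qs * kap * d) <=
  p * (nR * qt * (1 - d) * (nR * qs * (1 - d) - 1)).
Proof.
move=> nR0 qt0 qs0 kap0 d0 d8 one_le kap_le.
have W0 : 0 <= nR * (qt * qs) * (1 - 3 * d).
  by rewrite mulr_ge0 ?subr_ge0 ?mulr_ge0 ?ltW //; lra.
have p0 : 0 <= p.
  by rewrite -(pmulr_lge0 _ nR0); apply: le_trans kap_le; rewrite mulr_ge0 ?ltW //; lra.
have s1 := ler_wpM2l p0 (lower_counts_mul_ge nR0 qt0 qs0 d0 one_le).
have s2 := ler_wpM2r W0 kap_le.
set Z := nR * qt * qs * kap.
have Z0 : 0 < Z by rewrite !mulr_gt0.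
have s3 : 0 <= Z * (d * (3 - 24 * d)) by rewrite mulr_ge0 ?(ltW Z0) // mulr_ge0 //; lra.
have E1 : p * nR * (nR * (qt * qs) * (1 - 3 * d)) =
    p * (nR * nR * (qt * qs) * (1 - 3 * d)) by ring.
have E2 : kap * (1 + 8 * d) * (nR * (qt * qs) * (1 - 3 * d)) =
    Z + 2 * (Z * d) + Z * (d * (3 - 24 * d)) by rewrite /Z; ring.
rewrite E1 E2 in s2; lra.
Qed.

Lemma chernoff_exponent_le (L D m : R) : 0 < D -> 0 <= L -> L + D <= m ->
  exists2 lam, 0 <= lam <= 1 & lam * L - (lam - lam ^+ 2) * m <= - (D ^+ 2 / (4 * (L + D))).
Proof.
move=> D0 L0 LDm; have LD0 : 0 < L + D by lra.
set lam := D / (2 * (L + D)).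
have lam0 : 0 <= lam by rewrite divr_ge0 // ltW // mulr_gt0.
have lam_half : lam <= 1 / 2 by rewrite /lam ler_pdivrMr ?mulr_gt0 //; lra.
exists lam; first by rewrite lam0 /=; lra.
have : (lam - lam ^+ 2) * (L + D) <= (lam - lam ^+ 2) * m by rewrite ler_wpM2l //; nra.
have -> : - (D ^+ 2 / (4 * (L + D))) = lam * L - (lam - lam ^+ 2) * (L + D).
  by rewrite /lam; field; rewrite gt_eqF.
lra.
Qed.

Lemma arc_exponent_le (nR qt qs kap d p : R) :
  0 < nR -> 0 < qt -> 0 < qs -> 0 < kap -> 0 < d -> d <= 1 / 8 ->
  1 <= nR * qs * d -> kap * (1 + 8 * d) <= p * nR ->
  exists2 lam, 0 <= lam <= 1 &
    lam * (nR * qt * qs * kap) -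
      p * (lam - lam ^+ 2) * (nR * qt * (1 - d) * (nR * qs * (1 - d) - 1))
    <= - (qt * qs * kap / 2 * (nR * d ^+ 2)).
Proof.
move=> nR0 qt0 qs0 kap0 d0 d8 one_le kap_le.
set L := nR * qt * qs * kap; set D := 2 * (L * d).
have L0 : 0 < L by rewrite !mulr_gt0.
have D0 : 0 < D by rewrite mulr_gt0 // mulr_gt0.
have gap := arc_mean_gap_ge nR0 qt0 qs0 kap0 (ltW d0) d8 one_le kap_le.
have [lam lam01 opt] := chernoff_exponent_le D0 (ltW L0) gap.
exists lam => //.
rewrite (_ : p * _ * _ = (lam - lam ^+ 2) * (p * (nR * qt * (1 - d) * (nR * qs * (1 - d) - 1))));
  last by ring.
apply: le_trans opt _.
have -> : qt * qs * kap / 2 * (nR * d ^+ 2) = D ^+ 2 / (4 * (2 * L)).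
  by rewrite /D /L; field; rewrite !gt_eqF.
have DL : D <= L by rewrite /D mulrCA ler_piMr ?(ltW L0) //; lra.
rewrite lerN2 ler_wpM2l ?exprn_ge0 ?(ltW D0) // lef_pV2 ?posrE ?mulr_gt0 //; lra.
Qed.

End Exponents.

Section Excess.
Variable R : realType.

Lemma IRD_prob_pred0 (q : nat -> R) kn n
    (P : {ffun 'I_n -> nat} -> {set 'I_n * 'I_n} -> bool) :
  (forall x E, ~~ P x E) -> IRD_prob q kn P = 0%E.
Proof.
move=> P0; rewrite /IRD_prob esum1 // => x _.
by rewrite [X in _ * X]big_pred0 ?mulr0 // => E; exact/negbTE/P0.
Qed.

Lemma ltr_nat_floor (m : nat) (y : R) : (m%:Z < Num.floor y)%R -> m%:R < y.
Proof. by move=> lt_m; apply: lt_le_trans (floor_le y); rewrite -[m%:R]/(m%:Z%:~R) ltr_int. Qed.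

Lemma IRD_arc_count_lower_tail_excess (q : nat -> R) kn n t s (kap d : R)
    (P : {ffun 'I_n -> nat} -> {set 'I_n * 'I_n} -> bool) :
  (forall k, 0 <= q k) -> (\esum_(k in [set: nat]) (q k)%:E = 1)%E ->
  (forall a b, 0 <= kn a b) ->
  0 < q t -> 0 < q s -> 0 < kap -> 0 < d -> d <= 1 / 8 ->
  1 <= n%:R * q s * d -> kap * (1 + 8 * d) <= arc_prob kn n t s * n%:R ->
  (forall x E, P x E -> (arc_count x E t s)%:R < n%:R * q t * q s * kap) ->
  (IRD_prob q kn P <=
   (expR (- (q t / 4 * (n%:R * d ^+ 2))) + expR (- (q s / 4 * (n%:R * d ^+ 2))) +
    expR (- (q t * q s * kap / 2 * (n%:R * d ^+ 2))))%:E)%E.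
Proof.
move=> q_ge0 q_sum1 kn_ge0 qt0 qs0 kap0 d0 d8 one_le kap_le small.
have n0 : 0 < n%:R :> R.
  by rewrite -(pmulr_lgt0 _ d0) -(pmulr_lgt0 _ qs0) mulrAC (lt_le_trans ltr01).
have [lam lam01 arc_exp] := arc_exponent_le n0 qt0 qs0 kap0 d0 d8 one_le kap_le.
have b1 : 1 <= n%:R * q s * (1 - d).
  by apply: le_trans one_le _; rewrite ler_wpM2l ?mulr_ge0 ?(ltW n0) ?(ltW qs0) //; lra.
have a0 : 0 <= n%:R * q t * (1 - d) by rewrite !mulr_ge0 ?(ltW n0) ?(ltW qt0) //; lra.
have mu0 : 0 <= d / 2 by rewrite divr_ge0 ?(ltW d0).
apply: le_trans (IRD_prob_arc_count_lower_tail kn_ge0 q_ge0 q_sum1 small a0 b1 lam01 mu0 mu0) _.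
rewrite lee_fin !lerD ?ler_expR //.
all: by rewrite le_eqVlt; apply/predU1l; field.
Qed.

Definition rel_excess (c alpha : R) (n : nat) : R := c * n%:R `^ (- (1 / 2) + alpha).

Lemma powR_eventually_ge (c e K : R) : 0 < c -> 0 < e ->
  \forall n \near \oo, K <= c * n%:R `^ e.
Proof.
move=> c0 e0; near=> n; apply: le_trans (_ : ln n%:R ^+ 2 + K <= _).
  by rewrite lerDr sqr_ge0.
by near: n; exact: ln_sqr_le_powR_eventually.
Unshelve. all: by end_near.
Qed.

Lemma rel_excess_eventually (c alpha qs kap : R) :
  0 < c -> 0 < alpha < 1 / 2 -> 0 < qs -> 0 < kap ->
  \forall n \near \oo, [/\ rel_excess c alpha n <= 1 / 8,
    1 <= n%:R * qs * rel_excess c alpha n & kap * (1 + 8 * rel_excess c alpha n) <= n%:R].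
Proof.
move=> c0 /andP[alpha0 alpha_half] qs0 kap0; near=> n.
have c_le : 8 * c <= 1 * n%:R `^ (1 / 2 - alpha).
  by near: n; apply: powR_eventually_ge; lra.
have qs_le : 1 <= qs * c * n%:R `^ (1 / 2 + alpha).
  by near: n; apply: powR_eventually_ge; rewrite ?mulr_gt0 //; lra.
have kap_le : 2 * kap <= 1 * n%:R `^ 1 by near: n; apply: powR_eventually_ge.
have n0 : 0 < n%:R :> R by rewrite ltr0n; near: n; exact: nbhs_infty_gt.
have powRD' (a b : R) : n%:R `^ a * n%:R `^ b = n%:R `^ (a + b).
  by rewrite powRD // (gt_eqF n0) implybT.
have small : rel_excess c alpha n <= 1 / 8.
  rewrite mul1r /rel_excess -(ler_pM2r (powR_gt0 (- (1 / 2) + alpha) n0)) powRD' in c_le.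
  rewrite (_ : 1 / 2 - alpha + _ = 0) ?powRr0 in c_le; last by lra.
  by rewrite /rel_excess; rewrite -mulrA in c_le; lra.
split=> //.
  rewrite (_ : 1 / 2 + alpha = 1 + (- (1 / 2) + alpha)) in qs_le; last by lra.
  rewrite -powRD' powRr1 in qs_le; last exact: ltW n0.
  rewrite /rel_excess (_ : n%:R * qs * _ = qs * c * (n%:R * n%:R `^ (- (1 / 2) + alpha))) //.
  by ring.
apply: (@le_trans _ _ (2 * kap)); first by rewrite mulrC ler_wpM2r ?(ltW kap0) //; lra.
by rewrite mul1r powRr1 ?(ltW n0) in kap_le.
Unshelve. all: by end_near.
Qed.

Lemma rel_excess_exponent_eventually (c alpha k : R) : 0 < c -> 0 < alpha -> 0 < k ->
  \forall n \near \oo,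
    - (k * (n%:R * rel_excess c alpha n ^+ 2)) <= - (ln n%:R ^+ 2 / 2) - 1.
Proof.
move=> c0 alpha0 k0; near=> n.
have n0 : 0 < n%:R :> R by rewrite ltr0n; near: n; exact: nbhs_infty_gt.
have -> : n%:R * rel_excess c alpha n ^+ 2 = c ^+ 2 * n%:R `^ (2 * alpha).
  have powRD' (a b : R) : n%:R `^ a * n%:R `^ b = n%:R `^ (a + b).
    by rewrite powRD // (gt_eqF n0) implybT.
  rewrite /rel_excess exprMn mulrCA [_ `^ _ ^+ 2]expr2 powRD'.
  rewrite -{1}(powRr1 (ltW n0)) powRD'.
  by congr (_ * _ `^ _); lra.
have : ln n%:R ^+ 2 + 2 <= 2 * k * c ^+ 2 * n%:R `^ (2 * alpha).
  by near: n; apply: ln_sqr_le_powR_eventually; rewrite ?mulr_gt0 ?exprn_gt0 //; lra.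
lra.
Unshelve. all: by end_near.
Qed.

Lemma excess_conditions_eventually (c alpha qt qs kap : R) :
  0 < c -> 0 < alpha < 1 / 2 -> 0 < qt -> 0 < qs -> 0 < kap ->
  \forall n \near \oo, (0 < n)%N /\
    [/\ rel_excess c alpha n <= 1 / 8, 1 <= n%:R * qs * rel_excess c alpha n &
     kap * (1 + 8 * rel_excess c alpha n) <= n%:R] /\
    [/\ - (qt / 4 * (n%:R * rel_excess c alpha n ^+ 2)) <= - (ln n%:R ^+ 2 / 2) - 1,
     - (qs / 4 * (n%:R * rel_excess c alpha n ^+ 2)) <= - (ln n%:R ^+ 2 / 2) - 1 &
     - (qt * qs * kap / 2 * (n%:R * rel_excess c alpha n ^+ 2)) <= - (ln n%:R ^+ 2 / 2) - 1].
Proof.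
move=> c0 /[dup] alpha_range /andP[alpha0 _] qt0 qs0 kap0; near=> n; split; [|split].
- by near: n; exact: nbhs_infty_gt.
- by near: n; exact: rel_excess_eventually.
- split; near: n; apply: (rel_excess_exponent_eventually c0 alpha0);
    by rewrite ?divr_gt0 ?mulr_gt0.
Unshelve. all: by end_near.
Qed.

End Excess.

Theorem lemma3 (R : realType) (q : nat -> R) (delta tau : R)
    (kappa : nat -> nat -> R) (kn : nat -> nat -> nat -> R) (t s : nat)
    (alpha C : R) :
  (forall k, 0 <= q k) ->
  (\esum_(k in [set: nat]) (q k)%:E = 1%E) ->
  0 < delta ->
  (\esum_(k in [set: nat]) (q k * k%:R `^ delta)%:E < +oo)%E ->
  0 < tau < 1 ->
  (forall a b, 0 <= kappa a b) ->
  (forall n a b, 0 <= kn n a b) ->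
  1 / 2 - tau / 2 < alpha < 1 / 2 ->
  0 < C ->
  (forall n : nat, (0 < n)%N ->
     kappa t s + C * n%:R `^ (- (1 / 2) + alpha) / Num.sqrt (q t * q s)
       <= kn n t s) ->
  exists N : nat, forall n : nat, (N <= n)%N ->
    stable q tau n t -> stable q tau n s ->
    (IRD_prob q (kn n) (fun x E =>
        ((@arc_count n x E t s)%:Z < Num.floor (n%:R * q t * q s * kappa t s))%R)
     <= (2 * expR (- ((ln (n%:R : R)) ^+ 2) / 2))%:E)%E.
Proof.
move=> q_ge0 q_sum1 _ _ /andP[_ tau_lt1] kappa_ge0 kn_ge0 /andP[alpha_gt alpha_lt] C0 kn_ge.
have [mass0|] := eqVneq (q t * q s * kappa t s) 0.
  exists 0%N => n _ _ _; rewrite IRD_prob_pred0 ?lee_fin ?mulr_ge0 ?expR_ge0 // => x E.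
  by rewrite -!mulrA [q t * _]mulrA mass0 mulr0 floor0 -leNgt.
rewrite !mulf_eq0 !negb_or => /andP[/andP[qt_neq0 qs_neq0] kappa_neq0].
have [qt0 qs0 kappa0] : [/\ 0 < q t, 0 < q s & 0 < kappa t s].
  by rewrite !lt_def qt_neq0 qs_neq0 kappa_neq0 !q_ge0 kappa_ge0.
(* [8 * kappa t s * rel_excess c alpha n] is the excess of [kn n t s] over [kappa t s]. *)
set c := C / (8 * kappa t s * Num.sqrt (q t * q s)).
have c0 : 0 < c by rewrite divr_gt0 // !mulr_gt0 // sqrtr_gt0 mulr_gt0.
have alpha_range : 0 < alpha < 1 / 2 by rewrite alpha_lt andbT; lra.
have [N _ large] := excess_conditions_eventually c0 alpha_range qt0 qs0 kappa0.
exists N => n nN _ _; have [n0 [[d8 one_le kappa_le] [e1 e2 e3]]] := large n nN.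
have d0 : 0 < rel_excess c alpha n by rewrite mulr_gt0 // powR_gt0 // ltr0n.
apply: le_trans (IRD_arc_count_lower_tail_excess q_ge0 q_sum1 (kn_ge0 n) qt0 qs0 kappa0
  d0 d8 one_le _ _) _.
- apply: arc_prob_mul_ge => //.
  have -> : kappa t s * (1 + 8 * rel_excess c alpha n) =
      kappa t s + C * n%:R `^ (- (1 / 2) + alpha) / Num.sqrt (q t * q s).
    by rewrite /rel_excess /c; field; rewrite !gt_eqF // sqrtr_gt0 mulr_gt0.
  exact: kn_ge.
- by move=> x E /ltr_nat_floor.
by rewrite lee_fin sum3_expR_le.
Qed.
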